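(* Define $k:[0,1]\times[0,1]\to\mathbb{R}$ by $$k(s,t)=\sum_{j=1}^\infty \frac{(1-s^j)(1-t^j)}{j^2}.$$ Then $k$ is continuous on the whole closed unit square, i.e. $k\in C([0,1]\times[0,1])$. However, the first partial derivative of $k$ with respect to $s$, given for $0\le s<1$ and $0\le t\le 1$ by $\frac{\partial k(s,t)}{\partial s}=\sum_{j=1}^\infty \frac{-s^{j-1}(1-t^j)}{j}$, satisfies $$\lim_{s\to 1}\frac{\partial k(s,t)}{\partial s}=-\infty\quad\text{for every } 0\le t<1,$$ so $\frac{\partial k}{\partial s}$ does not extend to a function in $C([0,1]\times[0,1])$; in particular $k$ is not continuously differentiable on the closed unit square.
   Context: The function $k$ is the kernel of the integral operator $A^*A$ on $L^2(0,1)$, where $A=B^{(H)}\circ J:L^2(0,1)\to\ell^2$, $[Jx](s)=\int_0^s x(t)\,dt$ and $[B^{(H)}z]_j=\int_0^1 t^{j-1}z(t)\,dt$ for $j=1,2,\dots$; this background is not needed for the statement, which concerns only the explicitly defined series $k$. *)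

From Stdlib Require Import Reals.
From Coquelicot Require Import Coquelicot.
Open Scope R_scope.

Definition k_term (s t : R) (n : nat) : R :=
  (1 - s ^ (S n)) * (1 - t ^ (S n)) / (INR (S n)) ^ 2.

Definition k (s t : R) : R := Series (k_term s t).

Definition dk_term (s t : R) (n : nat) : R :=
  - (s ^ n) * (1 - t ^ (S n)) / INR (S n).

Definition dk (s t : R) : R := Series (dk_term s t).

Definition unit_square (p : R * R) : Prop :=
  0 <= fst p <= 1 /\ 0 <= snd p <= 1.

Definition continuous_on_square (f : R * R -> R) : Prop :=
  forall p, unit_square p ->
    filterlim f (within unit_square (locally p)) (locally (f p)).

From Stdlib Require Import Reals Lra Lia.
From Coquelicot Require Import Coquelicot.
Open Scope R_scope.

(* On the square the j-th term of k is bounded by 1/j^2, so k is continuous by the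
   Weierstrass M-test.  For fixed t, k(s,t) = f_t(1) - f_t(s) where
   f_t(x) = sum_j (1 - t^j)/j^2 x^j has bounded coefficients, hence radius of
   convergence at least 1, and dk/ds = -f_t' is obtained by termwise differentiation
   for s < 1.  As s -> 1 the (nonnegative) terms s^(j-1)(1 - t^j)/j of -dk/ds tend to
   (1 - t^j)/j >= (1 - t)/j, whose sum diverges like the harmonic series; so
   dk/ds -> -oo, which a function continuous at (1,0) cannot do. *)

Lemma pow_unit_interval x n : 0 <= x <= 1 -> 0 <= x ^ n <= 1.
Proof.
  intros Hx. split; [now apply pow_le|].
  rewrite <- (pow1 n). now apply pow_incr.
Qed.

Lemma INR_S_gt0 n : 0 < INR (S n).
Proof. apply lt_0_INR; lia. Qed.

Lemma is_series_inv_telescoping :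
  is_series (fun n => / INR (S n) - / INR (S (S n))) 1.
Proof.
  assert (Hsum : forall N, sum_n (fun n => / INR (S n) - / INR (S (S n))) N
                           = 1 - / INR (S (S N))).
  { induction N as [|N IH].
    - rewrite sum_O. simpl. lra.
    - rewrite sum_Sn, IH.
      (* [ring] only recognises equations stated at type [R], not at Coquelicot's
         structure carriers *)
      change (plus ?a ?b = ?c) with (@eq R (a + b) c). ring. }
  apply (is_lim_seq_ext (fun N => 1 - / INR (S (S N))) _ 1).
  { intros N. now rewrite Hsum. }
  assert (Hinv : is_lim_seq (fun N => / INR (S (S N))) 0).
  { apply (is_lim_seq_inv _ p_infty); [|discriminate].
    apply -> (is_lim_seq_incr_1 (fun n => INR (S n))).
    apply -> is_lim_seq_incr_1. apply is_lim_seq_INR. }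
  pose proof (is_lim_seq_minus' _ _ 1 0 (is_lim_seq_const 1) Hinv) as Hlim.
  now rewrite Rminus_0_r in Hlim.
Qed.

Lemma ex_series_inv_sqr : ex_series (fun n => / INR (S n) ^ 2).
Proof.
  apply (@ex_series_le R_AbsRing R_CompleteNormedModule _
           (fun n => 2 * (/ INR (S n) - / INR (S (S n))))).
  - intros n. change (Rabs (/ INR (S n) ^ 2) <= 2 * (/ INR (S n) - / INR (S (S n)))).
    pose proof (INR_S_gt0 n) as Hx. rewrite (S_INR (S n)).
    set (x := INR (S n)) in *.
    assert (1 <= x) by (unfold x; rewrite S_INR; pose proof (pos_INR n); lra).
    rewrite Rabs_pos_eq by (left; apply Rinv_0_lt_compat, pow_lt; lra).
    replace (2 * (/ x - / (x + 1))) with (/ x ^ 2 + (x - 1) / (x ^ 2 * (x + 1)))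
      by (field; lra).
    enough (0 <= (x - 1) / (x ^ 2 * (x + 1))) by lra.
    apply Rdiv_le_0_compat; [lra|]. apply Rmult_lt_0_compat; [apply pow_lt|]; lra.
  - apply (ex_series_scal_l 2 (fun n => / INR (S n) - / INR (S (S n)))).
    eexists. apply is_series_inv_telescoping.
Qed.

Lemma Un_cv_Series (a : nat -> R) : ex_series a -> Un_cv (sum_f_R0 a) (Series a).
Proof.
  intros Ha. apply is_lim_seq_Reals.
  apply (is_lim_seq_ext (sum_n a)); [apply sum_n_Reals | apply Series_correct, Ha].
Qed.

Lemma Rabs_Series_sub_sum_n_le (u M : nat -> R) N :
  (forall n, Rabs (u n) <= M n) -> ex_series M ->
  Rabs (Series u - sum_n u N) <= Series M - sum_n M N.
Proof.
  intros Hle HM.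
  assert (Hu : ex_series u).
  { apply ex_series_Rabs, (@ex_series_le R_AbsRing R_CompleteNormedModule _ M); [|exact HM].
    intros n. change (Rabs (Rabs (u n)) <= M n). now rewrite Rabs_Rabsolu. }
  rewrite !sum_n_Reals.
  apply (sum_maj1 (fun n _ => u n) M 0);
    [apply Un_cv_Series, Hu | apply Un_cv_Series, HM | exact Hle].
Qed.

Lemma sum_n_le_Series (u : nat -> R) N :
  (forall n, 0 <= u n) -> ex_series u -> sum_n u N <= Series u.
Proof.
  intros Hu Hex. rewrite sum_n_Reals.
  apply (growing_ineq (sum_f_R0 u)); [|now apply Un_cv_Series].
  intros n. simpl. specialize (Hu (S n)). lra.
Qed.

Section Series_of_functions.

Context {T : Type} (F : (T -> Prop) -> Prop) {FF : Filter F}.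

Lemma filterlim_sum_n (u : nat -> T -> R) (c : nat -> R) :
  (forall n, filterlim (u n) F (locally (c n))) ->
  forall N, filterlim (fun x => sum_n (fun n => u n x) N) F (locally (sum_n c N)).
Proof.
  intros Hu N. induction N as [|N IH].
  - rewrite sum_O. apply (filterlim_ext (u 0%nat)); [intros x; now rewrite sum_O | apply Hu].
  - rewrite sum_Sn.
    apply (filterlim_ext (fun x => plus (sum_n (fun n => u n x) N) (u (S N) x))).
    { intros x. now rewrite sum_Sn. }
    eapply filterlim_comp_2;
      [exact IH | apply Hu | apply (@filterlim_plus R_AbsRing R_NormedModule)].
Qed.

Lemma filterlim_Series_M_test (u : nat -> T -> R) (M : nat -> R) (x0 : T) :
  ex_series M ->
  F (fun x => forall n, Rabs (u n x) <= M n) ->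
  (forall n, Rabs (u n x0) <= M n) ->
  (forall n, filterlim (u n) F (locally (u n x0))) ->
  filterlim (fun x => Series (fun n => u n x)) F (locally (Series (fun n => u n x0))).
Proof.
  intros HM Hbound Hbound0 Hu. apply filterlim_locally. intros eps.
  assert (Heps3 : 0 < eps / 3) by (destruct eps; simpl; lra).
  destruct (proj1 (filterlim_locally _ _) (Series_correct _ HM) (mkposreal _ Heps3))
    as [N HN].
  specialize (HN N (le_n N)). change (Rabs (sum_n M N - Series M) < eps / 3) in HN.
  pose proof (proj1 (filterlim_locally _ _) (filterlim_sum_n u _ Hu N) (mkposreal _ Heps3))
    as Hsum.
  generalize (filter_and _ _ Hbound Hsum). apply filter_imp. intros x [Hx Hdiff].
  change (Rabs (sum_n (fun n => u n x) N - sum_n (fun n => u n x0) N) < eps / 3) in Hdiff.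
  change (Rabs (Series (fun n => u n x) - Series (fun n => u n x0)) < eps).
  pose proof (Rabs_Series_sub_sum_n_le _ _ N Hx HM) as Htail.
  pose proof (Rabs_Series_sub_sum_n_le _ _ N Hbound0 HM) as Htail0.
  apply Rabs_le_between in Htail. apply Rabs_le_between in Htail0.
  apply Rabs_lt_between in Hdiff. apply Rabs_lt_between in HN.
  apply Rabs_lt_between. lra.
Qed.

Lemma filterlim_Series_p_infty (u : nat -> T -> R) (c : nat -> R) :
  F (fun x => (forall n, 0 <= u n x) /\ ex_series (fun n => u n x)) ->
  (forall n, filterlim (u n) F (locally (c n))) ->
  is_lim_seq (sum_n c) p_infty ->
  filterlim (fun x => Series (fun n => u n x)) F (Rbar_locally p_infty).
Proof.
  intros Hpos Hu Hc P [M HM].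
  destruct (Hc (fun y => M + 1 < y) (ex_intro _ (M + 1) (fun _ H => H))) as [N HN].
  specialize (HN N (le_n N)).
  pose proof (proj1 (filterlim_locally _ _) (filterlim_sum_n u c Hu N) (mkposreal 1 Rlt_0_1))
    as Hnear.
  unfold filtermap. generalize (filter_and _ _ Hpos Hnear). apply filter_imp.
  intros x [[Hx Hex] Hball].
  change (Rabs (sum_n (fun n => u n x) N - sum_n c N) < 1) in Hball.
  apply Rabs_lt_between in Hball.
  pose proof (sum_n_le_Series _ N Hx Hex). apply HM. lra.
Qed.

End Series_of_functions.

Lemma continuous_pow_comp {U : UniformSpace} (f : U -> R) (x : U) n :
  continuous f x -> continuous (fun y => f y ^ n) x.
Proof.
  intros Hf. induction n as [|n IH]; simpl.
  - apply continuous_const.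
  - now apply (continuous_mult f (fun y => f y ^ n)).
Qed.

Lemma continuous_k_term n p : continuous (fun q => k_term (fst q) (snd q) n) p.
Proof.
  destruct p as [s t]. unfold k_term, Rdiv.
  apply (continuous_mult (fun q => (1 - fst q ^ S n) * (1 - snd q ^ S n)) (fun _ => _));
    [|apply continuous_const].
  apply (continuous_mult (fun q => 1 - fst q ^ S n) (fun q => 1 - snd q ^ S n));
    apply (continuous_minus (fun _ => 1)); try apply continuous_const;
    apply continuous_pow_comp; [apply continuous_fst | apply continuous_snd].
Qed.

Lemma Rabs_k_term_le s t n :
  0 <= s <= 1 -> 0 <= t <= 1 -> Rabs (k_term s t n) <= / INR (S n) ^ 2.
Proof.
  intros Hs Ht. unfold k_term, Rdiv.
  pose proof (pow_unit_interval s (S n) Hs). pose proof (pow_unit_interval t (S n) Ht).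
  assert (Hinv : 0 < / INR (S n) ^ 2) by apply Rinv_0_lt_compat, pow_lt, INR_S_gt0.
  rewrite Rabs_pos_eq by (apply Rmult_le_pos; [apply Rmult_le_pos|]; lra).
  rewrite <- (Rmult_1_l (/ INR (S n) ^ 2)) at 2.
  apply Rmult_le_compat_r; [lra|]. rewrite <- (Rmult_1_l 1).
  apply Rmult_le_compat; lra.
Qed.

Lemma ex_series_k_term s t : 0 <= s <= 1 -> 0 <= t <= 1 -> ex_series (k_term s t).
Proof.
  intros Hs Ht.
  apply (@ex_series_le R_AbsRing R_CompleteNormedModule _ (fun n => / INR (S n) ^ 2));
    [|exact ex_series_inv_sqr].
  intros n. now apply Rabs_k_term_le.
Qed.

Lemma continuous_on_square_k : continuous_on_square (fun p => k (fst p) (snd p)).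
Proof.
  intros p Hp. unfold k.
  apply (filterlim_Series_M_test _ (fun n q => k_term (fst q) (snd q) n) _ p
           ex_series_inv_sqr).
  - unfold within. apply filter_forall. intros q Hq n. apply Rabs_k_term_le; apply Hq.
  - intros n. apply Rabs_k_term_le; apply Hp.
  - intros n. eapply filterlim_filter_le_1; [apply filter_le_within | apply continuous_k_term].
Qed.

Definition k_coef (t : R) (n : nat) : R :=
  match n with
  | O => 0
  | S _ => (1 - t ^ n) / INR n ^ 2
  end.

Lemma k_coef_S t n : k_coef t (S n) = k_term 0 t n.
Proof. unfold k_term. simpl. unfold Rdiv. ring. Qed.

Lemma ex_series_k_coef_pow t x :
  0 <= t <= 1 -> 0 <= x <= 1 -> ex_series (fun n => k_coef t n * x ^ n).
Proof.
  intros Ht Hx. apply ex_series_incr_1.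
  apply (@ex_series_le R_AbsRing R_CompleteNormedModule _ (fun n => / INR (S n) ^ 2));
    [|exact ex_series_inv_sqr].
  intros n. change (Rabs (k_coef t (S n) * x ^ S n) <= / INR (S n) ^ 2).
  rewrite k_coef_S, Rabs_mult, <- (Rmult_1_r (/ INR (S n) ^ 2)).
  pose proof (pow_unit_interval x (S n) Hx).
  apply Rmult_le_compat; try apply Rabs_pos; [apply Rabs_k_term_le; lra|].
  rewrite Rabs_pos_eq; lra.
Qed.

Lemma k_eq_PSeries s t : 0 <= s <= 1 -> 0 <= t <= 1 ->
  k s t = PSeries (k_coef t) 1 - PSeries (k_coef t) s.
Proof.
  intros Hs Ht. unfold PSeries.
  rewrite <- Series_minus by (apply ex_series_k_coef_pow; lra).
  rewrite Series_incr_1.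
  2: { apply (ex_series_minus (V := R_NormedModule)); apply ex_series_k_coef_pow; lra. }
  simpl (k_coef t 0). rewrite !Rmult_0_l, Rminus_0_r, Rplus_0_l.
  apply Series_ext. intros n. rewrite k_coef_S. unfold k_term.
  rewrite pow1, pow_i by lia. unfold Rdiv. ring.
Qed.

Lemma CV_radius_ge_1 (a : nat -> R) :
  (forall n, Rabs (a n) <= 1) -> Rbar_le 1 (CV_radius a).
Proof.
  intros Ha. apply (proj1 (CV_radius_bounded a)).
  exists 1. intros n. rewrite pow1, Rmult_1_r. apply Ha.
Qed.

Lemma Rabs_lt_CV_radius_k_coef s t :
  0 <= s < 1 -> 0 <= t <= 1 -> Rbar_lt (Rabs s) (CV_radius (k_coef t)).
Proof.
  intros Hs Ht. apply (Rbar_lt_le_trans _ 1); [simpl; rewrite Rabs_pos_eq; lra|].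
  apply CV_radius_ge_1. intros [|n].
  - simpl. rewrite Rabs_R0. lra.
  - rewrite k_coef_S. eapply Rle_trans; [apply Rabs_k_term_le; lra|].
    rewrite <- Rinv_1. apply Rinv_le_contravar; [lra|].
    rewrite <- (pow1 2). apply pow_incr. rewrite S_INR. pose proof (pos_INR n). lra.
Qed.

Lemma dk_term_eq s t n : dk_term s t n = - (PS_derive (k_coef t) n * s ^ n).
Proof.
  unfold dk_term, PS_derive.
  change (k_coef t (S n)) with ((1 - t ^ S n) / INR (S n) ^ 2).
  field. apply Rgt_not_eq, INR_S_gt0.
Qed.

Lemma dk_eq_PSeries s t : dk s t = - PSeries (PS_derive (k_coef t)) s.
Proof.
  unfold dk, PSeries. rewrite <- Series_opp. apply Series_ext. apply dk_term_eq.
Qed.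

Lemma filterlim_difference_quotient (f : R -> R) x l :
  is_derive f x l -> filterlim (fun h => (f (x + h) - f x) / h) (locally' 0) (locally l).
Proof.
  intros Hf. apply is_derive_Reals in Hf. apply filterlim_locally. intros eps.
  destruct (Hf eps (cond_pos eps)) as [delta Hdelta].
  exists delta. intros h Hh Hh0. apply Hdelta; [exact Hh0|].
  change (Rabs (h - 0) < delta) in Hh. now rewrite Rminus_0_r in Hh.
Qed.

Lemma ex_series_dk_term s t : 0 <= s < 1 -> 0 <= t <= 1 -> ex_series (dk_term s t).
Proof.
  intros Hs Ht.
  apply (ex_series_ext (fun n => opp (PS_derive (k_coef t) n * s ^ n))).
  { intros n. now rewrite dk_term_eq. }
  apply (ex_series_opp (V := R_NormedModule)), ex_pseries_R, ex_pseries_derive.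
  now apply Rabs_lt_CV_radius_k_coef.
Qed.

Lemma filterlim_k_difference_quotient s t : 0 <= s < 1 -> 0 <= t <= 1 ->
  filterlim (fun h => (k (s + h) t - k s t) / h)
    (within (fun h => 0 <= s + h <= 1) (locally' 0)) (locally (dk s t)).
Proof.
  intros Hs Ht. set (f := PSeries (k_coef t)).
  apply (filterlim_ext_loc (fun h => opp ((f (s + h) - f s) / h))).
  { unfold within. apply filter_forall. intros h Hh. unfold f.
    rewrite !k_eq_PSeries by lra. change (opp ?x = ?y) with (@eq R (- x) y). unfold Rdiv. ring. }
  rewrite dk_eq_PSeries.
  eapply filterlim_filter_le_1; [apply filter_le_within|].
  eapply filterlim_comp; [|apply (filterlim_opp (V := R_NormedModule))].
  apply filterlim_difference_quotient, is_derive_PSeries.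
  now apply Rabs_lt_CV_radius_k_coef.
Qed.

Lemma ln_succ_sub_lt_inv x : 0 < x -> ln (x + 1) - ln x < / x.
Proof.
  intros Hx. rewrite <- ln_div by lra.
  replace ((x + 1) / x) with (1 + / x) by (field; lra).
  assert (Hinv : 0 < / x) by now apply Rinv_0_lt_compat.
  rewrite <- (ln_exp (/ x)) at 2. apply ln_increasing; [lra|].
  apply exp_ineq1. lra.
Qed.

Lemma ln_le_sum_n_inv N : ln (INR (S N) + 1) <= sum_n (fun n => / INR (S n)) N.
Proof.
  induction N as [|N IH].
  - rewrite sum_O. pose proof (ln_succ_sub_lt_inv 1 Rlt_0_1).
    rewrite ln_1 in *. simpl. lra.
  - rewrite sum_Sn. change (plus ?a ?b) with (a + b).
    pose proof (ln_succ_sub_lt_inv (INR (S (S N))) (INR_S_gt0 _)).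
    rewrite (S_INR (S N)) in *. lra.
Qed.

Lemma is_lim_seq_sum_n_inv : is_lim_seq (sum_n (fun n => / INR (S n))) p_infty.
Proof.
  apply (is_lim_seq_le_p_loc (fun N => ln (INR (S N) + 1))).
  { exists O. intros N _. apply ln_le_sum_n_inv. }
  eapply filterlim_comp; [|apply is_lim_ln_p].
  apply (is_lim_seq_le_p_loc INR); [|apply is_lim_seq_INR].
  exists O. intros N _. rewrite S_INR. lra.
Qed.

Lemma filterlim_at_left_pow_mult x c n :
  filterlim (fun s => s ^ n * c) (at_left x) (locally (x ^ n * c)).
Proof.
  eapply filterlim_filter_le_1; [apply filter_le_within|].
  apply (continuous_mult (fun s => s ^ n) (fun _ => c));
    [apply continuous_pow_comp, continuous_id | apply continuous_const].
Qed.

Lemma is_lim_seq_sum_n_dk_coef t : 0 <= t < 1 ->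
  is_lim_seq (sum_n (fun n => (1 - t ^ S n) / INR (S n))) p_infty.
Proof.
  intros Ht.
  apply (is_lim_seq_le_p_loc (fun N => (1 - t) * sum_n (fun n => / INR (S n)) N)).
  - exists O. intros N _. rewrite <- (sum_n_mult_l (K := R_Ring)).
    apply sum_n_m_le. intros n. change (mult ?a ?b) with (a * b). unfold Rdiv.
    apply Rmult_le_compat_r; [left; apply Rinv_0_lt_compat, INR_S_gt0|].
    pose proof (pow_unit_interval t n ltac:(lra)).
    assert (t * t ^ n <= t * 1) by (apply Rmult_le_compat_l; lra).
    change (t ^ S n) with (t * t ^ n). lra.
  - pose proof (is_lim_seq_scal_l _ (1 - t) _ is_lim_seq_sum_n_inv) as Hlim.
    replace (Rbar_mult (1 - t) p_infty) with p_infty in Hlim; [exact Hlim|].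
    symmetry. apply is_Rbar_mult_unique, is_Rbar_mult_sym, is_Rbar_mult_p_infty_pos.
    simpl. lra.
Qed.

Lemma dk_to_m_infty t : 0 <= t < 1 ->
  filterlim (fun s => dk s t) (at_left 1) (Rbar_locally m_infty).
Proof.
  intros Ht.
  set (c := fun n => (1 - t ^ S n) / INR (S n)).
  set (u := fun n s => s ^ n * c n).
  apply (filterlim_ext (fun s => - Series (fun n => u n s))).
  { intros s. unfold dk, u, c. rewrite <- Series_opp. apply Series_ext. intros n.
    unfold dk_term, Rdiv. ring. }
  eapply filterlim_comp; [|apply (filterlim_Rbar_opp p_infty)].
  apply (filterlim_Series_p_infty _ u c); [| |now apply is_lim_seq_sum_n_dk_coef].
  - exists (mkposreal 1 Rlt_0_1). intros s Hs Hs1.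
    change (Rabs (s - 1) < 1) in Hs. apply Rabs_lt_between in Hs.
    split.
    + intros n. unfold u, c. apply Rmult_le_pos; [apply pow_le; lra|].
      pose proof (pow_unit_interval t (S n) ltac:(lra)).
      apply Rdiv_le_0_compat; [lra | apply INR_S_gt0].
    + apply (ex_series_ext (fun n => opp (dk_term s t n))).
      { intros n. unfold u, c, dk_term. change (opp ?x = ?y) with (@eq R (- x) y).
        unfold Rdiv. ring. }
      apply (ex_series_opp (V := R_NormedModule)), ex_series_dk_term; lra.
  - intros n. pose proof (filterlim_at_left_pow_mult 1 (c n) n) as Hlim.
    now rewrite pow1, Rmult_1_l in Hlim.
Qed.

Lemma dk_no_continuous_extension :
  ~ (exists g : R * R -> R,
       continuous_on_square g /\
       forall s t, 0 <= s < 1 -> 0 <= t <= 1 -> g (s, t) = dk s t).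
Proof.
  intros [g [Hg Hext]].
  assert (Hcorner : unit_square (1, 0)) by (split; simpl; lra).
  destruct (proj1 (filterlim_locally _ _) (Hg (1, 0) Hcorner) (mkposreal 1 Rlt_0_1))
    as [d Hd].
  assert (Hnear : at_left 1 (fun s => Rabs (dk s 0 - g (1, 0)) < 1)).
  { exists (mkposreal (Rmin d 1) (Rmin_pos _ _ (cond_pos d) Rlt_0_1)).
    intros s Hs Hs1. simpl in Hs.
    change (Rabs (s - 1) < Rmin d 1) in Hs. apply Rabs_lt_between in Hs.
    pose proof (Rmin_l d 1). pose proof (Rmin_r d 1).
    rewrite <- Hext by lra. apply (Hd (s, 0)); [split|split; simpl; lra].
    - change (Rabs (s - 1) < d). apply Rabs_lt_between. lra.
    - change (Rabs (0 - 0) < d). rewrite Rminus_0_r, Rabs_R0. apply cond_pos. }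
  assert (Hfar : at_left 1 (fun s => dk s 0 < g (1, 0) - 1)).
  { apply (dk_to_m_infty 0 ltac:(lra) (fun y => y < g (1, 0) - 1)).
    now exists (g (1, 0) - 1). }
  destruct (filter_ex _ (filter_and _ _ Hnear Hfar)) as [s [Hs1 Hs2]].
  apply Rabs_lt_between in Hs1. lra.
Qed.

Theorem proposition2 :
  (* the series defining k converges on the closed square *)
  (forall s t, 0 <= s <= 1 -> 0 <= t <= 1 -> ex_series (k_term s t)) /\
  (* k is continuous on the closed unit square *)
  continuous_on_square (fun p => k (fst p) (snd p)) /\
  (* for 0 <= s < 1, 0 <= t <= 1 : dk/ds exists (relative to s in [0,1])
     and equals the termwise-differentiated series *)
  (forall s t, 0 <= s < 1 -> 0 <= t <= 1 ->
     ex_series (dk_term s t) /\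
     filterlim (fun h => (k (s + h) t - k s t) / h)
       (within (fun h => 0 <= s + h <= 1) (locally' 0))
       (locally (dk s t))) /\
  (* lim_{s -> 1} dk/ds (s,t) = -oo for every 0 <= t < 1 *)
  (forall t, 0 <= t < 1 ->
     filterlim (fun s => dk s t) (at_left 1) (Rbar_locally m_infty)) /\
  (* hence dk/ds has no continuous extension to the closed square *)
  ~ (exists g : R * R -> R,
       continuous_on_square g /\
       forall s t, 0 <= s < 1 -> 0 <= t <= 1 -> g (s, t) = dk s t).
Proof.
  split; [exact ex_series_k_term|].
  split; [exact continuous_on_square_k|].
  split.
  { intros s t Hs Ht.
    split; [now apply ex_series_dk_term | now apply filterlim_k_difference_quotient]. }
  split; [exact dk_to_m_infty | exact dk_no_continuous_extension].
Qed.
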